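(* Let $\mathcal{S}=(S,\overline{S})$ be a bisection, $u$ a vertex of the graph, $(A_u,B_u)$ a $u$-pair for $\mathcal{S}$, and $\mathcal{T}$ the bisection associated with $(A_u,B_u)$. Then $\mathrm{def}_{\mathcal{T}}(u)\ge a_u+1$.
   Context: $G$ is a finite simple undirected graph with an odd number $n$ of vertices; $N(u)$ is the set of neighbors of $u$ and $\overline{N}(u)$ the set of vertices other than $u$ not adjacent to $u$. Each vertex $x$ has stubbornness $\alpha_x\in(0,1)$ and $a_x=\lfloor\alpha_x/(1-\alpha_x)\rfloor$. $W(A,B)$ is the number of edges with one endpoint in $A$ and the other in $B$. A bisection $(S,\overline{S})$ partitions the vertices with $|S|=\frac{n+1}{2}$, $|\overline{S}|=\frac{n-1}{2}$. Deficiency: $\mathrm{def}_{\mathcal{S}}(x)=W(x,S)-W(x,\overline{S})$ for $x\in S$, $W(x,\overline{S})-W(x,S)$ for $x\in\overline{S}$. Rank: $\mathrm{rank}_{\mathcal{S}}(u)=\lceil (a_u+1-\mathrm{def}_{\mathcal{S}}(u))/2\rceil$. A $u$-pair for $\mathcal{S}$ is a pair of sets $(A_u,B_u)$ with: if $u\in S$, $A_u\subseteq S\cap\overline{N}(u)$, $B_u\subseteq\overline{S}\cap N(u)$, $|A_u|=|B_u|=\mathrm{rank}_{\mathcal{S}}(u)$; if $u\in\overline{S}$, $A_u\subseteq S\cap N(u)$, $B_u\subseteq\overline{S}\cap\overline{N}(u)$, $|A_u|=\mathrm{rank}_{\mathcal{S}}(u)$, $|B_u|=\mathrm{rank}_{\mathcal{S}}(u)-1$.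 The bisection associated with the $u$-pair is $\mathcal{T}=(S\setminus A_u\cup B_u,\ \overline{S}\setminus B_u\cup A_u)$ if $u\in S$, and $\mathcal{T}=(\overline{S}\setminus B_u\cup A_u,\ S\setminus A_u\cup B_u)$ if $u\in\overline{S}$. *)

From mathcomp Require Import all_boot all_order all_algebra.
Set Implicit Arguments. Unset Strict Implicit. Unset Printing Implicit Defensive.
Import Order.TTheory GRing.Theory Num.Theory.
Local Open Scope ring_scope.

(* Graph: vertex set T (finType), adjacency e (symmetric, irreflexive).
   A bisection (S, ~: S) is represented by its first part S. *)
Section Defs.
Variables (T : finType) (e : rel T).

Definition W (x : T) (A : {set T}) : nat := #|[set y in A | e x y]|.

Definition stub_a (R : archiRealFieldType) (alpha : T -> R) (x : T) : int :=
  Num.floor (alpha x / (1 - alpha x)).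

Definition deficiency (S : {set T}) (x : T) : int :=
  if x \in S then (W x S)%:Z - (W x (~: S))%:Z
  else (W x (~: S))%:Z - (W x S)%:Z.

Definition rank (R : archiRealFieldType) (alpha : T -> R) (S : {set T}) (u : T) : int :=
  Num.ceil (((stub_a alpha u + 1 - deficiency S u)%:~R : R) / 2).

Definition nonnbr (u : T) : {set T} := [set y | (y != u) && ~~ e u y].
Definition nbr (u : T) : {set T} := [set y | e u y].

Definition is_bisection (S : {set T}) : Prop := (#|S| = (#|T|.+1)./2)%N.

Definition is_u_pair (R : archiRealFieldType) (alpha : T -> R) (S : {set T}) (u : T)
    (A B : {set T}) : Prop :=
  if u \in S then
    [/\ A \subset S :&: nonnbr u, B \subset (~: S) :&: nbr u,
        #|A|%:Z = rank alpha S u & #|B|%:Z = rank alpha S u]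
  else
    [/\ A \subset S :&: nbr u, B \subset (~: S) :&: nonnbr u,
        #|A|%:Z = rank alpha S u & #|B|%:Z = rank alpha S u - 1].

Definition assoc_bisection (S : {set T}) (u : T) (A B : {set T}) : {set T} :=
  if u \in S then (S :\: A) :|: B else ((~: S) :\: B) :|: A.

End Defs.

From mathcomp Require Import all_boot all_order all_algebra ring zify.
Set Implicit Arguments.
Unset Strict Implicit.
Unset Printing Implicit Defensive.

Import Order.TTheory GRing.Theory Num.Theory.
Local Open Scope ring_scope.

(* Moving non-neighbours X of u out of u's side P and neighbours Y of u from
   the other side into it gives u exactly |Y| more neighbours on its own side
   and |Y| fewer on the other, so its deficiency grows by 2|Y|.  For a u-pair,
   the set moved onto u's side has size rank(u) = ceil((a_u + 1 - def(u)) / 2),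
   and 2 ceil(k / 2) >= k. *)

Section Swap.
Variables (T : finType) (e : rel T).

Lemma W_nbr (x : T) (A : {set T}) : W e x A = #|A :&: nbr e x|.
Proof. by apply: eq_card => y; rewrite !inE. Qed.

Lemma deficiency_setC (S : {set T}) (x : T) :
  deficiency e (~: S) x = deficiency e S x.
Proof. by rewrite /deficiency setCK inE; case: (x \in S). Qed.

Lemma deficiency_in (S : {set T}) (x : T) : x \in S ->
  deficiency e S x = (W e x S)%:Z - (W e x (~: S))%:Z.
Proof. by rewrite /deficiency => ->. Qed.

Variables (u : T) (P X Y : {set T}).
Hypotheses (X_nonnbr : X \subset nonnbr e u)
           (Y_nbr : Y \subset ~: P :&: nbr e u).

Let X_nonadj {y} : y \in X -> ~~ e u y.
Proof. by move/(subsetP X_nonnbr); rewrite !inE => /andP[]. Qed.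

Let Y_out_adj {y} : y \in Y -> (y \notin P) && e u y.
Proof. by move/(subsetP Y_nbr); rewrite !inE. Qed.

Lemma W_swap_in : W e u ((P :\: X) :|: Y) = (W e u P + #|Y|)%N.
Proof.
rewrite !W_nbr.
have -> : ((P :\: X) :|: Y) :&: nbr e u = (P :&: nbr e u) :|: Y.
  apply/setP => y; rewrite !inE.
  case yY: (y \in Y); first by have /andP[_ ->] := Y_out_adj yY; rewrite !orbT.
  by case: (boolP (y \in X)) => [/X_nonadj/negbTE ->|_]; rewrite ?andbF ?orbF.
rewrite cardsU; suff -> : P :&: nbr e u :&: Y = set0 by rewrite cards0 subn0.
apply/setP => y; rewrite !inE; case yY: (y \in Y); last by rewrite andbF.
by have /andP[/negbTE -> _] := Y_out_adj yY.
Qed.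

Lemma W_swap_out : (W e u (~: ((P :\: X) :|: Y)) + #|Y|)%N = W e u (~: P).
Proof.
rewrite !W_nbr.
have -> : ~: ((P :\: X) :|: Y) :&: nbr e u = (~: P :&: nbr e u) :\: Y.
  apply/setP => y; rewrite !inE.
  case yY: (y \in Y); first by rewrite orbT.
  by case: (boolP (y \in X)) => [/X_nonadj/negbTE ->|_]; rewrite ?andbF ?orbF.
by rewrite (cardsDS Y_nbr) subnK // subset_leq_card.
Qed.

Lemma deficiency_swap : u \in P ->
  deficiency e ((P :\: X) :|: Y) u = deficiency e P u + 2 * #|Y|%:Z.
Proof.
move=> uP; have uX : u \notin X.
  by apply/negP => /(subsetP X_nonnbr); rewrite !inE eqxx.
rewrite !deficiency_in // ?inE ?uP ?uX //.
by rewrite W_swap_in -W_swap_out !PoszD; ring.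
Qed.

End Swap.

Lemma le_double_ceil_half (R : archiRealFieldType) (k : int) :
  k <= 2 * Num.ceil ((k%:~R : R) / 2).
Proof.
rewrite -(ler_int R) intrM -[leLHS](@divfK _ 2) ?pnatr_eq0 // mulrC.
by rewrite ler_pM2l ?ceil_ge.
Qed.

Theorem lemma3 (R : archiRealFieldType) (T : finType) (e : rel T)
  (e_sym : symmetric e) (e_irr : irreflexive e) (n_odd : odd #|T|)
  (alpha : T -> R) (alpha_range : forall x, 0 < alpha x < 1)
  (S : {set T}) (HS : is_bisection S) (u : T) (A B : {set T})
  (HAB : is_u_pair e alpha S u A B) :
  deficiency e (assoc_bisection S u A B) u >= stub_a alpha u + 1.
Proof.
have := le_double_ceil_half R (stub_a alpha u + 1 - deficiency e S u).
rewrite -/(rank e alpha S u) /assoc_bisection.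
move: HAB; rewrite /is_u_pair; case: ifP => uS.
- case=> /subset_trans/(_ (subsetIr _ _)) A_nonnbr B_nbr _ cardB.
  by rewrite (deficiency_swap A_nonnbr B_nbr) // -cardB; lia.
- case=> A_nbr /subset_trans/(_ (subsetIr _ _)) B_nonnbr cardA _.
  rewrite -(setCK S) in A_nbr.
  by rewrite (deficiency_swap B_nonnbr A_nbr) ?inE ?uS // deficiency_setC -cardA; lia.
Qed.
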